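(* Let $m\geq 2$ be an integer and $(t_n)_{n=0}^{\infty}$ the $TM_m$ sequence. If $m=2$, then $(t_n)_{n=0}^{\infty}$ is palindromic. If $m>2$, then $(t_n)_{n=0}^{\infty}$ is not eventually palindromic.
   Context: For an integer $m\geq 2$, the $TM_m$ sequence $(t_n)_{n=0}^{\infty}$ is defined by: if $n=\sum_{j=0}^{k}c_j m^j$ is the base-$m$ expansion of $n\geq 0$ (digits $c_j\in\{0,\ldots,m-1\}$), then $t_n:=\sum_{j=0}^{k}c_j \bmod m$. A sequence $(x_i)_{i=0}^{\infty}$ is palindromic if there exists an increasing sequence of positive integers $(n_j)_{j\geq 1}$ such that for every $j$ and every $k\in\{0,\ldots,n_j\}$, $x_k=x_{n_j-k}$. It is eventually palindromic if there is $N$ such that $(x_{N+i})_{i=0}^{\infty}$ is palindromic. *)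

From mathcomp Require Import all_boot.
Set Implicit Arguments. Unset Strict Implicit. Unset Printing Implicit Defensive.

(* Sum of base-m digits of n, computed with fuel k (fuel n suffices for m >= 2). *)
Fixpoint digsum_aux (m k n : nat) : nat :=
  match k with
  | 0 => 0
  | k'.+1 => if n == 0 then 0 else n %% m + digsum_aux m k' (n %/ m)
  end.

Definition digsum (m n : nat) : nat := digsum_aux m n n.

Definition TM (m : nat) (n : nat) : nat := digsum m n %% m.

Definition palindromic (x : nat -> nat) : Prop :=
  exists nj : nat -> nat,
    (forall j, 0 < nj j) /\ (forall j, nj j < nj j.+1) /\
    (forall j k, k <= nj j -> x k = x (nj j - k)).

Definition eventually_palindromic (x : nat -> nat) : Prop :=
  exists N : nat, palindromic (fun i => x (N + i)).

From mathcomp Require Import all_boot.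
From mathcomp Require Import zify.

(* For m = 2, complementing the L lowest bits of k < 2^L turns its digit sum s
   into L - s, so t_(2^L - 1 - k) = t_k when L is even: every prefix of length
   4^j is a palindrome.  For m > 2, incrementing n raises the digit sum by one
   unless m divides n + 1, so right after a multiple a of m the sequence reads
   s, s+1, s+2 (mod m).  A long palindrome starting at N contains such a window;
   its mirror image is the window read backwards, and of its two steps at most
   one ends at a multiple of m, the other one forcing s = s + 2 (mod m). *)

Lemma digsum_aux_fuel m k1 k2 n : 1 < m -> n <= k1 -> n <= k2 ->
  digsum_aux m k1 n = digsum_aux m k2 n.
Proof.
move=> m_gt1; elim: k1 k2 n => [|k1 IHk] [|k2] n /= n_k1 n_k2 //;
  try by have -> : n = 0 by lia.
case: eqP => // /eqP n_neq0.
have : n %/ m < n by apply: ltn_Pdiv; lia.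
by move=> n_div_lt; congr (_ + _); apply: IHk; lia.
Qed.

Lemma digsumE m n : 1 < m -> digsum m n = n %% m + digsum m (n %/ m).
Proof.
move=> m_gt1; case: n => [|n]; first by rewrite mod0n div0n.
rewrite /digsum /=; congr (_ + _); apply: digsum_aux_fuel => //.
have : n.+1 %/ m < n.+1 by apply: ltn_Pdiv; lia.
lia.
Qed.

Lemma digsumS m n : 1 < m -> ~~ (m %| n.+1) -> digsum m n.+1 = (digsum m n).+1.
Proof.
move=> m_gt1 m_ndvd; rewrite (digsumE _ n.+1 m_gt1) (digsumE _ n m_gt1).
have n_mod_lt : (n %% m).+1 < m.
  by have := modnS n m; rewrite (negbTE m_ndvd) => <-; rewrite ltn_mod; lia.
have -> : n.+1 %/ m = n %/ m.
  by rewrite {1}(divn_eq n m) -addnS divnMDl ?(divn_small n_mod_lt) ?addn0 //; lia.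
by rewrite modnS (negbTE m_ndvd) addSn.
Qed.

Lemma digsum_complement m L k : 1 < m -> k < m ^ L ->
  digsum m (m ^ L - 1 - k) + digsum m k = L * (m - 1).
Proof.
move=> m_gt1; elim: L k => [|L IHL] k k_lt.
  by rewrite expn0 in k_lt; have -> : k = 0 by lia.
have k_mod_lt : k %% m < m by rewrite ltn_mod; lia.
have k_div_lt : k %/ m < m ^ L by rewrite ltn_divLR 1?mulnC -1?expnS; lia.
have k_eq := divn_eq k m.
have comp_eq : m ^ L.+1 - 1 - k = (m ^ L - 1 - k %/ m) * m + (m - 1 - k %% m).
  rewrite expnS mulnC; move: k_div_lt k_mod_lt k_eq.
  move: (m ^ L) (k %/ m) (k %% m) => P q r q_lt r_lt ->.
  rewrite -(subnK q_lt); move: (P - q.+1) => d.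
  have -> : d + q.+1 - 1 - q = d by lia.
  by rewrite mulnDl mulSn; lia.
have digit_lt : m - 1 - k %% m < m by lia.
rewrite (digsumE _ _ m_gt1) comp_eq modnMDl divnMDl; last by lia.
rewrite (modn_small digit_lt) (divn_small digit_lt) addn0 (digsumE _ k m_gt1).
by have := IHL _ k_div_lt; rewrite mulSn; lia.
Qed.

Lemma TM2_complement L k : ~~ odd L -> k < 2 ^ L -> TM 2 (2 ^ L - 1 - k) = TM 2 k.
Proof.
move=> L_even k_lt; have := @digsum_complement 2 L k isT k_lt.
rewrite muln1 /TM !modn2 => /(congr1 odd); rewrite oddD (negbTE L_even).
by case: odd; case: odd.
Qed.

Lemma TM2_palindromic : palindromic (TM 2).
Proof.
have pow_gt0 j : 0 < 2 ^ (2 * j) by rewrite expn_gt0.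
exists (fun j => 2 ^ (2 * j.+1) - 1); split; [|split].
- by move=> j; rewrite mulnS expnD; have := pow_gt0 j; lia.
- by move=> j; rewrite (mulnS 2 j.+1) expnD; have := pow_gt0 j.+1; lia.
- move=> j k k_le; have k_lt : k < 2 ^ (2 * j.+1) by have := pow_gt0 j.+1; lia.
  by rewrite TM2_complement // oddM.
Qed.

Lemma no_modn_descent m x y : 2 < m -> x.+1 = y %[mod m] -> x = y.+1 %[mod m] -> False.
Proof.
move=> m_gt2 x1_eq x_eq.
have : x + 2 == x + 0 %[mod m].
  by rewrite addn0 x_eq addn2 -(addn1 x.+1) -(addn1 y) -modnDml x1_eq modnDml.
by rewrite eqn_modDl mod0n modn_small.
Qed.

Lemma TM_no_reflected_run m a c : 2 < m -> m %| a ->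
  TM m a = TM m c.+2 -> TM m a.+1 = TM m c.+1 -> TM m a.+2 = TM m c -> False.
Proof.
rewrite /TM => m_gt2 m_dvd_a; have m_gt1 : 1 < m by lia.
have ndvd_near_a i : 0 < i < m -> ~~ (m %| a + i).
  by move=> i_bounds; rewrite dvdn_addr //; apply/negP => /dvdn_leq; lia.
have ds_a1 : digsum m a.+1 = (digsum m a).+1.
  by rewrite digsumS // -addn1 ndvd_near_a //; lia.
have ds_a2 : digsum m a.+2 = (digsum m a).+2.
  by rewrite digsumS ?ds_a1 // -addn2 ndvd_near_a //; lia.
rewrite ds_a1 ds_a2; have [m_dvd_c2 | m_ndvd_c2] := boolP (m %| c.+2).
- have m_ndvd_c1 : ~~ (m %| c.+1).
    by apply/negP => m_dvd_c1; move: m_dvd_c2; rewrite -addn1 dvdn_addr ?dvdn1 //; lia.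
  rewrite (digsumS _ _ m_gt1 m_ndvd_c1) => _ ds_c1 ds_c; exact: no_modn_descent m_gt2 ds_c ds_c1.
- rewrite (digsumS _ _ m_gt1 m_ndvd_c2) => ds_c2 ds_c1 _; exact: no_modn_descent m_gt2 ds_c1 ds_c2.
Qed.

Lemma leq_id_incr (f : nat -> nat) : (forall j, f j < f j.+1) -> forall j, j <= f j.
Proof. by move=> f_incr; elim=> // j IHj; apply: leq_ltn_trans (f_incr j). Qed.

Lemma TM_not_eventually_palindromic m : 2 < m -> ~ eventually_palindromic (TM m).
Proof.
move=> m_gt2 [N [nj [_ [nj_incr nj_pal]]]]; have m_gt0 : 0 < m by lia.
pose n := nj m.+2; have n_ge : m.+2 <= n by apply: leq_id_incr.
pose a := (N %/ m).+1 * m; have m_dvd_a : m %| a by apply: dvdn_mull.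
have /andP[N_lt_a a_le] : N < a <= N + m.
  by rewrite /a mulSn; have := divn_eq N m; have := ltn_pmod N m_gt0; lia.
clearbody a.
pose c := N + (n - (a - N).+2).
have mirror k : k <= 2 -> TM m (a + k) = TM m (c + (2 - k)).
  move=> k_le; have -> : a + k = N + (a - N + k) by lia.
  have -> : c + (2 - k) = N + (n - (a - N + k)) by rewrite /c; lia.
  by apply: nj_pal; lia.
apply: (TM_no_reflected_run m a c m_gt2 m_dvd_a).
- by have := mirror 0; rewrite addn0 addn2; apply.
- by have := mirror 1; rewrite addn1 addn1; apply.
- by have := mirror 2; rewrite addn2 addn0; apply.
Qed.

Theorem theorem2p2 (m : nat) (hm : 2 <= m) :
  (m = 2 -> palindromic (TM m)) /\
  (2 < m -> ~ eventually_palindromic (TM m)).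
Proof.
split; first by move=> ->; exact: TM2_palindromic.
exact: TM_not_eventually_palindromic.
Qed.
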